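(* Let $G$ be a stochastic game with generalized-reachability objective $\mathcal T$ of dimension $n$, let $(L_i,U_i)=\overline{\mathfrak B}^{\,i}(L_0,U_0)$ be the sequence computed by Multi-Objective Bounded Value Iteration, and let $L_\infty(s)=\bigcup_{i\ge0}L_i(s)$. Then for all states $s\in S$ and all directions $\mathbf d\in\mathsf D$, $L_\infty(s)[\mathbf d]=\mathfrak A(s)[\mathbf d]$.
   Context: Stochastic game $G=(S,S_\Box,S_\circ,s_0,A,\mathrm{Av},\delta)$: finite state set $S$ partitioned into Maximizer states $S_\Box$ and Minimizer states $S_\circ$, initial state $s_0$, finite action set $A$, nonempty $\mathrm{Av}(s)$, transition distributions $\delta(s,a)$. Strategies history-dependent randomized; $\mathbb P^{\sigma,\tau}_s$ measure on infinite paths from $s$. Objective $\mathcal T=(T_1,\dots,T_n)$; $\mathfrak A(s)$ = set of $\vec v\in\mathbb R^n_{\ge0}$ such that some Maximizer strategy $\sigma$ gives $\mathbb P^{\sigma,\tau}_s(\Diamond T_i)\ge\vec v_i$ for all Minimizer $\tau$ and all $i$. Geometry: $\mathit{dwc}(X)=\{y\in\mathbb R^n_{\ge0}\mid\exists x\in X:y\le x\}$; $\mathbf 1=\mathit{dwc}(\{\vec1\})$; scaling, Minkowski sum, $\mathrm{conv}$. Directions $[\vec v]=\{\lambda\vec v\mid\lambda>0\}$; $\mathsf D$ = directions of $\vec v\in[0,1]^n\setminus\{\vec0\}$; $X[\mathbf d]=\sup\{\|\vec x\|\mid\vec x\in X,[\vec x]=\mathbf d\}$, $\sup\emptyset=0$.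 Regions are subsets of $\mathsf D$, identified with the points whose direction lies in them. $f(s,a):=\big(\mathit{dwc}(\{\mathbb 1_{\mathcal T}(s)\})+\sum_{s'}\delta(s,a)(s')\cdot f(s')\big)\cap\mathbf 1$ with $\mathbb 1_{\mathcal T}(s)_i=1$ iff $s\in T_i$. Bellman operator: $\mathfrak B(f)(s)=\bigcap_af(s,a)$ for $s\in S_\circ$, $\mathrm{conv}(\bigcup_af(s,a))$ for $s\in S_\Box$. ECs/MECs as usual ($\mathsf{Exits}(T)$ = pairs $(s,a)$, $s\in T$, with a successor outside $T$). Best exit $\mathsf{exit}[f](T)=\big(\mathit{dwc}(\{\sum_{s\in T}\mathbb 1_{\mathcal T}(s)\})+\mathrm{conv}(\bigcup_{(s,a)\in\mathsf{Exits}(T),s\in S_\Box}f(s,a))\big)\cap\mathbf 1$, $\bigcup_\emptyset=\{\vec0\}$. $\mathsf{DEFLATE\_SECs}(G,L,U)$: states in no MEC keep $U(s)$; for each MEC $T$, compute a partition of $\mathsf D$ by common refinement over $s\in T\cap S_\circ$ of the nonempty sets $\{\mathbf d\mid B=\arg\min_{a}L(s,a)[\mathbf d]\}$, $B\subseteq\mathrm{Av}(s)$; for each region $R$ pick $\mathbf d\in R$, restrict Minimizer states in $T$ to actions minimizing $L(s,a)[\mathbf d]$, compute the MECs $\mathcal S$ of $T$ under the restriction; for $s\in T$, the new bound is the union over regions $R$ of $U(s)\cap\mathsf{exit}[U](C)\cap R$ if $s\in C\in\mathcal S$, else $U(s)\cap R$, together with $\vec0$. Multi-Objective Bounded Value Iteration: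 $L_0(s)=\{\vec0\}$, $U_0(s)=\mathit{dwc}(\{\vec1\})$; $\overline{\mathfrak B}(L,U)=(\mathfrak B(L),\mathsf{DEFLATE\_SECs}(G,\mathfrak B(L),\mathfrak B(U)))$. *)

From HB Require Import structures.
From mathcomp Require Import all_boot all_order all_algebra.
From mathcomp Require Import boolp classical_sets reals.
Set Implicit Arguments. Unset Strict Implicit. Unset Printing Implicit Defensive.
Import Order.TTheory GRing.Theory Num.Theory.
Local Open Scope classical_set_scope.
Local Open Scope ring_scope.

Section Games.
Variable R : realType.

(* S : states, A : actions; [is_max s] = true iff s is a Maximizer state
   (S_box), false iff Minimizer state (S_circ). *)
Record game (S A : finType) := Game {
  is_max : S -> bool;
  s_init : S;
  Av : S -> {set A};
  delta : S -> A -> S -> R }.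

Definition wf_game (S A : finType) (G : game S A) : Prop :=
  (forall s, Av G s != finset.set0) /\
  (forall s a, a \in Av G s ->
     (forall s', 0 <= delta G s a s') /\ \sum_(s' : S) delta G s a s' = 1).

(* finite histories s0 a0 s1 a1 ... s_k: list of (state,action) pairs
   already played, plus the current state. *)
Definition strategy (S A : finType) := seq (S * A) -> S -> A -> R.

Definition valid_strategy (S A : finType) (G : game S A) (owner : bool)
  (st : strategy S A) : Prop :=
  forall (h : seq (S * A)) (s : S), is_max G s = owner ->
    (forall a, 0 <= st h s a) /\ (forall a, a \notin Av G s -> st h s a = 0)
    /\ \sum_(a : A) st h s a = 1.

Fixpoint reach_within (S A : finType) (G : game S A) (sg tau : strategy S A)
  (T : {set S}) (k : nat) (h : seq (S * A)) (s : S) : R :=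
  if s \in T then 1 else
  match k with
  | 0 => 0
  | k'.+1 =>
      \sum_(a : A) (if is_max G s then sg h s a else tau h s a) *
        \sum_(s' : S) delta G s a s' * reach_within G sg tau T k' (rcons h (s, a)) s'
  end.

(* P^{sigma,tau}_s(<> T) = lim_k P(reach T within k steps) = sup_k ... *)
Definition reach_prob (S A : finType) (G : game S A) (sg tau : strategy S A)
  (T : {set S}) (s : S) : R :=
  sup [set reach_within G sg tau T k [::] s | k in [set: nat]].

Definition vec (n : nat) := 'I_n -> R.
Definition vle n (x y : vec n) := forall i, x i <= y i.
Definition nonneg n (x : vec n) := forall i, 0 <= x i.
Definition vconst n (c : R) : vec n := fun _ => c.

Definition dwc n (X : set (vec n)) : set (vec n) :=
  [set y | nonneg y /\ exists2 x, X x & vle y x].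
Definition unit_box n : set (vec n) := dwc [set @vconst n 1].
Definition vscale n (c : R) (X : set (vec n)) : set (vec n) :=
  [set (fun i => c * x i) | x in X].
Definition msum n (X Y : set (vec n)) : set (vec n) :=
  [set z | exists x y, [/\ X x, Y y & z = (fun i => x i + y i)]].
Definition bigmsum n (I : finType) (F : I -> set (vec n)) : set (vec n) :=
  [set z | exists g : I -> vec n, (forall j, F j (g j)) /\
                                  z = (fun i => \sum_(j : I) g j i)].
Definition conv n (X : set (vec n)) : set (vec n) :=
  [set z | exists (k : nat) (w : 'I_k -> R) (p : 'I_k -> vec n),
     [/\ (forall j, 0 <= w j), \sum_(j < k) w j = 1, (forall j, X (p j))
       & z = (fun i => \sum_(j < k) w j * p j i)]].

Definition vnorm n (x : vec n) : R := Num.sqrt (\sum_(i < n) x i ^+ 2).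
(* the direction [d] of a nonzero d is represented by d itself;
   X[d] = sup { ||x|| | x in X, [x] = [d] }, sup of the empty set = 0 *)
Definition same_dir n (x d : vec n) := exists2 l : R, 0 < l & x = (fun i => l * d i).
Definition dirval n (X : set (vec n)) (d : vec n) : R :=
  sup [set vnorm x | x in [set x | X x /\ same_dir x d]].
Definition in_D n (d : vec n) := (forall i, 0 <= d i <= 1) /\ exists i, d i != 0.

Definition indic (S : finType) n (T : 'I_n -> {set S}) (s : S) : vec n :=
  fun i => if s \in T i then 1 else 0.

Definition achievable (S A : finType) (G : game S A) n (T : 'I_n -> {set S})
  (s : S) : set (vec n) :=
  [set v | nonneg v /\ exists sg, valid_strategy G true sg /\
     forall tau, valid_strategy G false tau ->
       forall i, v i <= reach_prob G sg tau (T i) s].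

Definition fsa (S A : finType) (G : game S A) n (T : 'I_n -> {set S})
  (f : S -> set (vec n)) (s : S) (a : A) : set (vec n) :=
  msum (dwc [set indic T s]) (bigmsum (fun s' => vscale (delta G s a s') (f s')))
  `&` @unit_box n.

Definition bellman (S A : finType) (G : game S A) n (T : 'I_n -> {set S})
  (f : S -> set (vec n)) (s : S) : set (vec n) :=
  if is_max G s then conv (\bigcup_(a in [set a | a \in Av G s]) fsa G T f s a)
  else \bigcap_(a in [set a | a \in Av G s]) fsa G T f s a.

(* L_0(s) = {0}; L_{i+1} = B(L_i) (the first component of
   \overline{B}(L_i,U_i) is B(L_i), independently of U_i) *)
Fixpoint Lseq (S A : finType) (G : game S A) n (T : 'I_n -> {set S}) (i : nat)
  : S -> set (vec n) :=
  match i with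
  | 0 => fun _ => [set @vconst n 0]
  | i'.+1 => bellman G T (Lseq G T i')
  end.

Definition Linf (S A : finType) (G : game S A) n (T : 'I_n -> {set S}) (s : S)
  : set (vec n) := \bigcup_(i in [set: nat]) Lseq G T i s.

End Games.

From HB Require Import structures.
From mathcomp Require Import all_boot all_order all_algebra.
From mathcomp Require Import boolp classical_sets reals.
From mathcomp Require Import ring lra.
Import Order.TTheory GRing.Theory Num.Theory.
Local Open Scope classical_set_scope.
Local Open Scope ring_scope.
Set Implicit Arguments. Unset Strict Implicit. Unset Printing Implicit Defensive.

(* L_oo(s) is contained in A(s), and conversely c x lies in L_oo(s) for every
   x in A(s) and c < 1; shrinking by such factors does not change the supremum
   along a direction.

   Soundness: a vector of L_k(s) is guaranteed within k steps by a Maximizer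
   strategy read off the Bellman operator.  At a Maximizer state, a point of
   conv (U_a f(s,a)) is a randomisation over actions; the points attached to
   one action are merged into one continuation using convexity of L_(k-1).

   Completeness: fix a Maximizer strategy sg and an objective i, and let v_k
   be the k-step value of T_i under sg when Minimizer picks, at every history,
   an action minimising the expected next value.  The vector (v_k^i)_i lies in
   L_k(s), and the limit of v_k^i bounds the probability of reaching T_i against
   the limiting best response.  So if x is achievable with sg, every c x with
   c < 1 lies below (v_k^i)_i for some k, hence in L_k(s). *)

Lemma eventually_all (I : finType) (P : I -> nat -> Prop) :
  (forall i, exists k, P i k) -> (forall i k k', (k <= k')%N -> P i k -> P i k') ->
  exists k, forall i, P i k.
Proof.
move=> /choice [kf Hkf] Pmono; exists (\max_i kf i)%N => i.
exact: Pmono (leq_bigmax i) (Hkf i).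
Qed.

Section Scalars.
Variable R : realFieldType.

Lemma exists_ratio (y z : R) : 0 <= y <= z -> exists2 c, 0 <= c <= 1 & y = c * z.
Proof.
case/andP=> y0 yz; have [z0|zN0] := eqVneq z 0.
  exists 0; first by rewrite lexx ler01.
  by apply/eqP; rewrite mul0r eq_le y0 -z0 yz.
have z_gt0 : 0 < z by rewrite lt_def zN0 (le_trans y0 yz).
exists (y / z); last by rewrite divfK.
by rewrite divr_ge0 ?(ltW z_gt0) //= ler_pdivrMr // mul1r.
Qed.

Lemma ler_of_shrink (x y : R) :
  0 <= x -> (forall c, 0 < c < 1 -> c * x <= y) -> x <= y.
Proof.
move=> x0 Hc; rewrite leNgt; apply/negP => yx.
have y0 : 0 <= y.
  apply: le_trans (Hc 2^-1 _); first by rewrite mulr_ge0 // invr_ge0 ler0n.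
  by apply/andP; split; lra.
have x_gt0 : 0 < x := le_lt_trans y0 yx.
have c01 : 0 < (1 + y / x) / 2 < 1.
  have yx0 : 0 <= y / x by rewrite divr_ge0 // ltW.
  have yx1 : y / x < 1 by rewrite ltr_pdivrMr // mul1r.
  by apply/andP; split; lra.
have := Hc _ c01.
have -> : (1 + y / x) / 2 * x = (x + y) / 2 by field; rewrite gt_eqF.
lra.
Qed.

End Scalars.

Section Distributions.
Variables (R : numDomainType) (I : finType).

Record distr_on (P : {set I}) (mu : I -> R) : Prop := DistrOn {
  distr_ge0 : forall a, 0 <= mu a;
  distr_supp : forall a, a \notin P -> mu a = 0;
  distr_sum1 : \sum_a mu a = 1 }.

Definition point_mass (a0 : I) : I -> R := fun a => (a == a0)%:R.

Lemma expect_point_mass (a0 : I) (F : I -> R) :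
  \sum_a point_mass a0 a * F a = F a0.
Proof.
rewrite (bigD1 a0) //= /point_mass eqxx mul1r big1 ?addr0 // => a /negPf ->.
by rewrite mul0r.
Qed.

Lemma point_mass_distr (P : {set I}) (a0 : I) :
  a0 \in P -> distr_on P (point_mass a0).
Proof.
move=> a0P; split=> [a|a aNP|]; rewrite /point_mass ?ler0n //.
  by case: eqP aNP => // ->; rewrite a0P.
by rewrite (bigD1 a0) //= eqxx big1 ?addr0 // => a /negPf ->.
Qed.

Section Expectation.
Variables (P : {set I}) (mu : I -> R).
Hypothesis mu_distr : distr_on P mu.

Lemma expect_le (X Y : I -> R) :
  (forall a, a \in P -> X a <= Y a) -> \sum_a mu a * X a <= \sum_a mu a * Y a.
Proof.
case: mu_distr => mu0 muP _ XY; apply: ler_sum => a _.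
have [aP|aNP] := boolP (a \in P); first by rewrite ler_wpM2l ?XY.
by rewrite muP // !mul0r.
Qed.

Lemma expect_const c : \sum_a mu a * c = c.
Proof. by rewrite -mulr_suml (distr_sum1 mu_distr) mul1r. Qed.

Lemma expect_addr (X : I -> R) c :
  \sum_a mu a * (X a + c) = \sum_a mu a * X a + c.
Proof. by under eq_bigr do rewrite mulrDr; rewrite big_split /= expect_const. Qed.

Lemma expect_bounds (X : I -> R) :
  (forall a, a \in P -> 0 <= X a <= 1) -> 0 <= \sum_a mu a * X a <= 1.
Proof.
move=> X01; apply/andP; split.
  by rewrite -[X in X <= _](expect_const 0); apply: expect_le => a /X01 /andP[].
by rewrite -[X in _ <= X](expect_const 1); apply: expect_le => a /X01 /andP[].
Qed.

End Expectation.
End Distributions.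

Section Geometry.
Variables (R : realType) (n : nat).
Local Notation vecn := (vec R n).
Implicit Types (X : set vecn) (x y z : vecn).

Definition scale_closed X :=
  forall x c, X x -> (forall i, 0 <= c i <= 1) -> X (fun i => c i * x i).

Definition convex_set X := forall x y l, X x -> X y -> 0 <= l <= 1 ->
  X (fun i => l * x i + (1 - l) * y i).

Definition boxed X := forall x, X x -> forall i, 0 <= x i <= 1.

Record down_convex X : Prop := DownConvex {
  dc_scale : scale_closed X;
  dc_convex : convex_set X;
  dc_boxed : boxed X;
  dc0 : X (vconst 0) }.

Lemma scale_closed_le X x y :
  scale_closed X -> X x -> (forall i, 0 <= y i <= x i) -> X y.
Proof.
move=> HX Xx yx.
have /choice [c Hc] : forall i, exists c, (0 <= c <= 1) /\ y i = c * x i.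
  by move=> i; have [c ? ?] := exists_ratio (yx i); exists c.
have -> : y = (fun i => c i * x i) by apply: funext => i; case: (Hc i).
by apply: HX => // i; case: (Hc i).
Qed.

Lemma subset_conv X : X `<=` conv X.
Proof.
move=> x Xx; exists 1%N, (fun=> 1), (fun=> x); split=> //; first by rewrite big_ord1.
by apply: funext => i; rewrite big_ord1 mul1r.
Qed.

Lemma conv_scale_closed X : scale_closed X -> scale_closed (conv X).
Proof.
move=> HX _ c [k [w [p [w0 w1 Xp ->]]]] c01.
exists k, w, (fun j i => c i * p j i); split=> // [j|]; first exact: HX.
by apply: funext => i /=; rewrite mulr_sumr; apply: eq_bigr => j _; rewrite mulrCA.
Qed.

Lemma conv_boxed X : boxed X -> boxed (conv X).
Proof.
move=> HX _ [k [w [p [w0 w1 Xp ->]]]] i.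
have p01 j := HX _ (Xp j) i; apply/andP; split.
  by apply: sumr_ge0 => j _; rewrite mulr_ge0 //; case/andP: (p01 j).
by rewrite -w1; apply: ler_sum => j _; rewrite ler_piMr //; case/andP: (p01 j).
Qed.

Lemma conv_combination (I : finType) (P : {set I}) X (mu : I -> R) (p : I -> vecn) :
  distr_on P mu -> (forall j, j \in P -> X (p j)) ->
  conv X (fun i => \sum_j mu j * p j i).
Proof.
move=> Hmu Xp.
have onP (F : I -> R) : (forall j, j \notin P -> F j = 0) ->
    \sum_j F j = \sum_(k < #|P|) F (enum_val k).
  move=> F0; rewrite -(big_enum_val F) [RHS]big_mkcond /=.
  by apply: eq_bigr => j _; case: ifP => // /negbT /F0.
have muP := distr_supp Hmu.
exists #|P|, (fun k => mu (enum_val k)), (fun k => p (enum_val k)); split.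
- by move=> k; apply: distr_ge0 Hmu _.
- by rewrite -onP ?(distr_sum1 Hmu).
- by move=> k; apply/Xp/enum_valP.
by apply: funext => i; rewrite onP // => j /muP ->; rewrite mul0r.
Qed.

Lemma conv_convex X : convex_set (conv X).
Proof.
move=> _ _ l [k [w [p [w0 w1 Xp ->]]]] [k' [w' [p' [w0' w1' Xp' ->]]]] /andP[l0 l1].
pose mu (j : 'I_k + 'I_k') := match j with inl a => l * w a | inr b => (1 - l) * w' b end.
pose q (j : 'I_k + 'I_k') := match j with inl a => p a | inr b => p' b end.
have Hmu : distr_on [set: 'I_k + 'I_k'] mu.
  split=> [[a|b]|j|]; rewrite ?inE //= ?mulr_ge0 ?subr_ge0 //.
  by rewrite big_sumType /= -!mulr_sumr w1 w1' !mulr1 subrKC.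
rewrite [Z in conv _ Z](_ : _ = fun i => \sum_j mu j * q j i).
  by apply: conv_combination Hmu _ => -[a|b] _; [exact: Xp | exact: Xp'].
apply: funext => i; rewrite big_sumType /= !mulr_sumr.
by congr (_ + _); apply: eq_bigr => j _; rewrite mulrA.
Qed.

Lemma convex_set_conv X : convex_set X -> conv X `<=` X.
Proof.
move=> HX _ [k [w [p [w0 w1 Xp ->]]]]; elim: k w p w0 w1 Xp => [|k IH] w p w0 w1 Xp.
  by move: w1; rewrite big_ord0 => /eqP; rewrite eq_sym oner_eq0.
move: w1; rewrite big_ord_recl => w1.
have [w_ord0|w_ord0N1] := eqVneq (w ord0) 1.
  have wr0 j : w (lift ord0 j) = 0.
    move/eqP: w1; rewrite w_ord0 -subr_eq0 addrC addKr psumr_eq0 // => /allP.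
    by move=> /(_ j (mem_index_enum _)) /implyP /(_ isT) /eqP.
  suff -> : (fun i => \sum_(j < k.+1) w j * p j i) = p ord0 by [].
  by apply: funext => i; rewrite big_ord_recl big1 ?addr0 ?w_ord0 ?mul1r // => j _;
    rewrite wr0 mul0r.
set t := 1 - w ord0.
have t_gt0 : 0 < t.
  by rewrite subr_gt0 lt_def eq_sym w_ord0N1 -w1 lerDl sumr_ge0.
have rest_sum : \sum_(j < k) w (lift ord0 j) = t by rewrite /t -w1 addrC addKr.
have Xrest := IH (fun j => w (lift ord0 j) / t) (fun j => p (lift ord0 j))
  (fun j => divr_ge0 (w0 _) (ltW t_gt0)).
have {}Xrest := Xrest _ (fun j => Xp (lift ord0 j)).
rewrite -mulr_suml rest_sum divff ?gt_eqF // in Xrest.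
have w01 : 0 <= w ord0 <= 1 by rewrite w0 -subr_ge0 ltW.
have := HX _ _ _ (Xp ord0) (Xrest erefl) w01; congr X; apply: funext => i.
rewrite big_ord_recl mulr_sumr; congr (_ + _); apply: eq_bigr => j _.
by rewrite mulrA mulrCA divff ?gt_eqF // mulr1.
Qed.

Lemma conv_bigcup_decomp (I : finType) (P : {set I}) (X : I -> set vecn) z :
  (forall a, convex_set (X a)) -> (forall a, X a (vconst 0)) ->
  conv (\bigcup_(a in [set a | a \in P]) X a) z ->
  exists mu (x : I -> vecn),
    [/\ distr_on P mu, forall a, X a (x a) & z = (fun i => \sum_a mu a * x a i)].
Proof.
move=> Xconv X0 [k [w [p [w0 w1 Xp ->]]]].
have /choice [cf Hcf] : forall j, exists a, a \in P /\ X a (p j).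
  by move=> j; case: (Xp j) => a aP ?; exists a.
pose mu a := \sum_(j | cf j == a) w j.
pose x a i := \sum_j (if cf j == a then w j / mu a * p j i else 0).
have fiber a i : mu a * x a i = \sum_(j | cf j == a) w j * p j i.
  rewrite big_mkcond mulr_sumr; apply: eq_bigr => j _; case: eqP => [cfj|]; last first.
    by rewrite mulr0.
  have [mu0|muN0] := eqVneq (mu a) 0; last by rewrite mulrA mulrCA divff // mulr1.
  move/eqP: mu0; rewrite psumr_eq0 // => /allP /(_ j (mem_index_enum _)).
  by rewrite cfj eqxx => /implyP /(_ isT) /eqP ->; rewrite !(mul0r, mulr0).
exists mu, x; split.
- split=> [a|a aNP|]; first exact: sumr_ge0.
    by apply: big1 => j /eqP cfj; case: (Hcf j); rewrite cfj (negPf aNP).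
  by rewrite -w1 [RHS](partition_big cf xpredT).
- move=> a; have [mu0|muN0] := eqVneq (mu a) 0.
    suff -> : x a = vconst 0 by [].
    by apply: funext => i; apply: big1 => j _; rewrite mu0 invr0 mulr0 mul0r; case: ifP.
  apply: convex_set_conv (Xconv a) _ _.
  exists k, (fun j => if cf j == a then w j / mu a else 0),
    (fun j => if cf j == a then p j else vconst 0); split.
  + by move=> j; case: ifP => // _; rewrite divr_ge0 ?sumr_ge0.
  + by rewrite -big_mkcond -mulr_suml divff.
  + by move=> j; case: eqP => [<-|_]; [case: (Hcf j) | apply: X0].
  by apply: funext => i; apply: eq_bigr => j _; case: ifP; rewrite ?mul0r.
apply: funext => i; rewrite (partition_big cf xpredT) //=.
by apply: eq_bigr => a _; rewrite fiber.
Qed.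

Definition dir_norms X (d : vecn) := [set vnorm x | x in [set x | X x /\ same_dir x d]].

Lemma vnorm_ge0 x : 0 <= vnorm x.
Proof. exact: sqrtr_ge0. Qed.

Lemma vnorm_scale x c : 0 <= c -> vnorm (fun i => c * x i) = c * vnorm x.
Proof.
move=> c0; rewrite /vnorm.
have -> : \sum_(i < n) (c * x i) ^+ 2 = c ^+ 2 * \sum_(i < n) x i ^+ 2.
  by rewrite mulr_sumr; apply: eq_bigr => i _; rewrite exprMn.
by rewrite sqrtrM ?sqr_ge0 // sqrtr_sqr ger0_norm.
Qed.

Lemma vnorm_le_sqrt_dim x : (forall i, 0 <= x i <= 1) -> vnorm x <= Num.sqrt n%:R.
Proof.
move=> x01; apply: ler_wsqrtr.
rewrite -[n in n%:R]card_ord -sumr_const; apply: ler_sum => i _.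
by case/andP: (x01 i) => x0 x1; rewrite expr2 mulr_ile1.
Qed.

Lemma dir_norms_bounded X d : boxed X -> has_ubound (dir_norms X d).
Proof. by move=> HX; exists (Num.sqrt n%:R) => _ [x [Xx _] <-]; apply/vnorm_le_sqrt_dim/HX. Qed.

Lemma dirval_ge0 X d : boxed X -> 0 <= dirval X d.
Proof.
move=> HX; rewrite /dirval -/(dir_norms X d).
have [->|/set0P [_ [x Xx _]]] := eqVneq (dir_norms X d) set0; first by rewrite sup0.
apply: le_trans (vnorm_ge0 x) _; apply: ub_le_sup; first exact: dir_norms_bounded.
by exists x.
Qed.

Lemma dirval_le_shrink X Y d : boxed Y ->
  (forall x c, X x -> 0 < c < 1 -> Y (fun i => c * x i)) -> dirval X d <= dirval Y d.
Proof.
move=> HY XY; rewrite /dirval -/(dir_norms X d) -/(dir_norms Y d).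
have [->|/set0P XdN0] := eqVneq (dir_norms X d) set0; first by rewrite sup0 dirval_ge0.
apply: ge_sup => // _ [x [Xx [l l_gt0 xd]] <-].
apply: ler_of_shrink (vnorm_ge0 x) _ => c /andP[c_gt0 c1].
rewrite -vnorm_scale ?(ltW c_gt0) //; apply: ub_le_sup; first exact: dir_norms_bounded.
exists (fun i => c * x i) => //; split; first by apply: XY; rewrite ?c_gt0.
by exists (c * l); [exact: mulr_gt0 | apply: funext => i; rewrite xd mulrA].
Qed.

End Geometry.

Section Strategies.
Variables (R : realType) (S A : finType) (G : game R S A).
Hypothesis wf : wf_game G.
Local Notation history := (seq (S * A)).
Local Notation strat := (strategy R S A).
Local Notation RW := (reach_within G).

Lemma Av_nonempty s : exists a, a \in Av G s.
Proof. by apply/set0Pn; case: wf => + _; apply. Qed.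

Definition default_act s : A := xchoose (Av_nonempty s).

Lemma default_actP s : default_act s \in Av G s.
Proof. exact: xchooseP. Qed.

Lemma delta_distr s a : a \in Av G s -> distr_on [set: S] (delta G s a).
Proof.
by case: wf => _ H /H [d0 d1]; split=> [|s'|//]; [exact: d0 | rewrite inE].
Qed.

Lemma valid_strategyP b (st : strat) :
  valid_strategy G b st <-> forall h s, is_max G s = b -> distr_on (Av G s) (st h s).
Proof.
split=> [Hst h s /(Hst h) [st0 [stA st1]] | Hst h s /(Hst h) []]; first by split.
by move=> st0 stA st1; split.
Qed.

Lemma strategy_distr (sg tau : strat) h s :
  valid_strategy G true sg -> valid_strategy G false tau ->
  distr_on (Av G s) (fun a => if is_max G s then sg h s a else tau h s a).
Proof.
move=> /valid_strategyP Hsg /valid_strategyP Htau.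
by case Hm: (is_max G s); [apply: Hsg | apply: Htau].
Qed.

Lemma reach_within_bounds (sg tau : strat) Ti k h s :
  valid_strategy G true sg -> valid_strategy G false tau -> 0 <= RW sg tau Ti k h s <= 1.
Proof.
move=> Hsg Htau; elim: k h s => [|k IH] h s /=; case: ifP => _; rewrite ?lexx ?ler01 //.
apply: (expect_bounds (strategy_distr h s Hsg Htau)) => a aA.
by apply: (expect_bounds (delta_distr aA)) => s' _; apply: IH.
Qed.

Lemma reach_within_le_prob (sg tau : strat) Ti k s :
  valid_strategy G true sg -> valid_strategy G false tau ->
  RW sg tau Ti k [::] s <= reach_prob G sg tau Ti s.
Proof.
move=> Hsg Htau; apply: ub_le_sup; last by exists k.
by exists 1 => _ [k' _ <-]; case/andP: (reach_within_bounds Ti k' [::] s Hsg Htau).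
Qed.

Lemma reach_prob_le1 (sg tau : strat) Ti s :
  valid_strategy G true sg -> valid_strategy G false tau -> reach_prob G sg tau Ti s <= 1.
Proof.
move=> Hsg Htau; apply: ge_sup; first by exists (RW sg tau Ti 0 [::] s), 0%N.
by move=> _ [k _ <-]; case/andP: (reach_within_bounds Ti k [::] s Hsg Htau).
Qed.

Definition extends (h : history) s (h' : history) (t : S) : Prop :=
  (h' = h /\ t = s) \/ exists b e, h' = h ++ (s, b) :: e.

Lemma reach_within_local (sg1 sg2 tau : strat) Ti k h s :
  (forall h' t, extends h s h' t -> sg1 h' t =1 sg2 h' t) ->
  RW sg1 tau Ti k h s = RW sg2 tau Ti k h s.
Proof.
elim: k h s => [|k IH] h s Hsg //=; case: ifP => // _.
apply: eq_bigr => a _; congr (_ * _); first by case: ifP => // _; apply: Hsg; left.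
apply: eq_bigr => s' _; congr (_ * _); apply: IH => h' t [[-> ->]|[b [e ->]]];
  apply: Hsg; right; exists a.
  by exists [::]; rewrite cats1.
by exists ((s', b) :: e); rewrite cat_rcons.
Qed.

Definition default_strategy : strat := fun _ t => point_mass R (default_act t).

Lemma default_strategy_valid b : valid_strategy G b default_strategy.
Proof. by apply/valid_strategyP => h t _; apply/point_mass_distr/default_actP. Qed.

(* At the history h0 s0 play mu; on histories extending h0 (s0, b) s', follow
   fam b s' (s' is the first state of e, or the current state if e is empty). *)
Definition branch (h0 : history) (s0 : S) (mu : A -> R) (fam : A -> S -> strat) : strat :=
  fun h t =>
  match drop (size h0) h with
  | [::] => if (h == h0) && (t == s0) then mu else default_strategy h t
  | (s1, b) :: e =>
      if (take (size h0) h == h0) && (s1 == s0)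
      then fam b (if e is (s', _) :: _ then s' else t) h t
      else default_strategy h t
  end.

Lemma branch_root h0 s0 mu fam : branch h0 s0 mu fam h0 s0 = mu.
Proof. by rewrite /branch drop_size !eqxx. Qed.

Lemma branch_extends h0 s0 mu fam b s' h' t : extends (rcons h0 (s0, b)) s' h' t ->
  branch h0 s0 mu fam h' t = fam b s' h' t.
Proof.
rewrite /branch => -[[-> ->]|[b' [e ->]]].
  by rewrite -cats1 drop_size_cat // take_size_cat // !eqxx.
by rewrite cat_rcons drop_size_cat // take_size_cat // !eqxx.
Qed.

Lemma branch_valid h0 s0 mu fam : (is_max G s0 -> distr_on (Av G s0) mu) ->
  (forall b s', valid_strategy G true (fam b s')) ->
  valid_strategy G true (branch h0 s0 mu fam).
Proof.
move=> Hmu Hfam; apply/valid_strategyP => h t Ht; rewrite /branch.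
have /valid_strategyP /(_ h t Ht) Hdef := @default_strategy_valid true.
case: (drop _ _) => [|[s1 b] e]; case: ifP => // /andP[_ /eqP t_s0].
  by rewrite t_s0 in Ht *; apply: Hmu.
by have /valid_strategyP := Hfam b (if e is (s', _) :: _ then s' else t); apply.
Qed.

Definition argmin_act s (F : A -> R) : A :=
  Order.arg_min (default_act s) (fun a => a \in Av G s) F.

Lemma argmin_act_mem s F : argmin_act s F \in Av G s.
Proof. by rewrite /argmin_act; case: arg_minP => //; exact: default_actP. Qed.

Definition min_act s (F : A -> R) := F (argmin_act s F).

Lemma min_act_le s F a : a \in Av G s -> min_act s F <= F a.
Proof.
by rewrite /min_act /argmin_act; case: arg_minP => [|b _]; [exact: default_actP | apply].
Qed.

Section BestResponse.
Variable sg : strat.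
Hypothesis Hsg : valid_strategy G true sg.
Variable Ti : {set S}.

Lemma sg_distr h s : is_max G s -> distr_on (Av G s) (sg h s).
Proof. by have /valid_strategyP := Hsg; apply. Qed.

(* [br_]: Minimizer best-responds to sg by minimising the expected next value V;
   the response depends on the target Ti. *)
Definition br_step (V : history -> S -> R) h s : R :=
  if s \in Ti then 1 else
  if is_max G s then \sum_a sg h s a * \sum_s' delta G s a s' * V (rcons h (s, a)) s'
  else min_act s (fun a => \sum_s' delta G s a s' * V (rcons h (s, a)) s').

Fixpoint br_value k : history -> S -> R :=
  if k is k'.+1 then br_step (br_value k') else fun _ _ => 0.

Lemma br_step_bounds V h s : (forall h s, 0 <= V h s <= 1) -> 0 <= br_step V h s <= 1.
Proof.
move=> V01; rewrite /br_step; case: ifP => _; first by rewrite ler01 lexx.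
have next01 a : a \in Av G s -> 0 <= \sum_s' delta G s a s' * V (rcons h (s, a)) s' <= 1.
  by move=> aA; apply: (expect_bounds (delta_distr aA)) => s' _.
case: ifP => Hm; first exact: (expect_bounds (sg_distr h Hm)).
exact/next01/argmin_act_mem.
Qed.

Lemma br_step_le_add V W e h s : 0 <= e ->
  (forall a s', V (rcons h (s, a)) s' <= W (rcons h (s, a)) s' + e) ->
  br_step V h s <= br_step W h s + e.
Proof.
move=> e0 VW; rewrite /br_step; case: ifP => _; first by rewrite lerDl.
have next_le a : a \in Av G s -> \sum_s' delta G s a s' * V (rcons h (s, a)) s' <=
    \sum_s' delta G s a s' * W (rcons h (s, a)) s' + e.
  by move=> aA; rewrite -(expect_addr (delta_distr aA)); apply: (expect_le (delta_distr aA)).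
case: ifP => Hm.
  by rewrite -(expect_addr (sg_distr h Hm)); apply: (expect_le (sg_distr h Hm)).
have bA := argmin_act_mem s (fun a => \sum_s' delta G s a s' * W (rcons h (s, a)) s').
exact: le_trans (min_act_le _ bA) (next_le _ bA).
Qed.

Lemma br_step_mono V W h s :
  (forall a s', V (rcons h (s, a)) s' <= W (rcons h (s, a)) s') ->
  br_step V h s <= br_step W h s.
Proof. by move=> VW; rewrite -[leRHS]addr0; apply: br_step_le_add => // a s'; rewrite addr0. Qed.

Lemma br_value_bounds k h s : 0 <= br_value k h s <= 1.
Proof. by elim: k h s => [|k IH] h s /=; [rewrite lexx ler01 | apply: br_step_bounds]. Qed.

Lemma br_value_mono h s : {homo (fun k => br_value k h s) : k k' / (k <= k')%N >-> k <= k'}.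
Proof.
apply: (homo_leq lexx le_trans) => k; elim: k h s => [|k IH] h s; last exact: br_step_mono.
by case/andP: (br_value_bounds 1 h s).
Qed.

Definition br_limit h s := sup [set br_value k h s | k in [set: nat]].

Lemma br_values_has_sup h s : has_sup [set br_value k h s | k in [set: nat]].
Proof.
split; first by exists (br_value 0 h s), 0%N.
by exists 1 => _ [k _ <-]; case/andP: (br_value_bounds k h s).
Qed.

Lemma br_value_le_limit k h s : br_value k h s <= br_limit h s.
Proof. by apply: sup_upper_bound; [exact: br_values_has_sup | exists k]. Qed.

Lemma br_limit_bounds h s : 0 <= br_limit h s <= 1.
Proof.
apply/andP; split; first exact: br_value_le_limit 0%N h s.
by apply: ge_sup; [exists 0; exists 0%N | move=> _ [k _ <-]; case/andP: (br_value_bounds k h s)].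
Qed.

Lemma br_limit_approx h s e : 0 < e -> exists k, br_limit h s <= br_value k h s + e.
Proof.
move=> e_gt0; have [_ [k _ <-] /ltW] := sup_adherent e_gt0 (br_values_has_sup h s).
by exists k; rewrite -lerBlDr.
Qed.

Lemma br_step_limit_le h s : br_step br_limit h s <= br_limit h s.
Proof.
apply/ler_addgt0Pr => e e_gt0.
have [k Hk] : exists k, forall p : A * S,
    br_limit (rcons h (s, p.1)) p.2 <= br_value k (rcons h (s, p.1)) p.2 + e.
  apply: eventually_all => [[a s']|p k k' /(br_value_mono (rcons h (s, p.1)) p.2) kk'].
    exact: br_limit_approx.
  by move/le_trans; apply; rewrite lerD2r.
apply: le_trans (br_step_le_add (ltW e_gt0) (fun a s' => Hk (a, s'))) _.
by rewrite lerD2r; apply: (br_value_le_limit k.+1).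
Qed.

Definition br_strategy : strat := fun h t =>
  point_mass R (argmin_act t (fun a => \sum_s' delta G t a s' * br_limit (rcons h (t, a)) s')).

Lemma br_strategy_valid : valid_strategy G false br_strategy.
Proof. by apply/valid_strategyP => h t _; apply/point_mass_distr/argmin_act_mem. Qed.

Lemma reach_within_le_br_limit k h s : RW sg br_strategy Ti k h s <= br_limit h s.
Proof.
elim: k h s => [|k IH] h s; apply: le_trans (br_step_limit_le h s); rewrite /=.
  case: ifP => [sT|_]; first by rewrite /br_step sT.
  by case/andP: (br_step_bounds h s br_limit_bounds).
rewrite /br_step; case: ifP => // _; case: ifP => Hm.
  apply: (expect_le (sg_distr h Hm)) => a aA.
  by apply: (expect_le (delta_distr aA)) => s' _.
rewrite /br_strategy expect_point_mass.
by apply: (expect_le (delta_distr (argmin_act_mem _ _))) => s' _.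
Qed.

Lemma reach_prob_le_br_limit s : reach_prob G sg br_strategy Ti s <= br_limit [::] s.
Proof.
apply: ge_sup; first by exists (RW sg br_strategy Ti 0 [::] s), 0%N.
by move=> _ [k _ <-]; apply: reach_within_le_br_limit.
Qed.

End BestResponse.
End Strategies.

Section Bellman.
Variables (R : realType) (S A : finType) (G : game R S A) (n : nat) (T : 'I_n -> {set S}).
Hypothesis wf : wf_game G.
Local Notation vecn := (vec R n).
Local Notation RW := (reach_within G).
Implicit Types (f : S -> set vecn) (x z : vecn).

Lemma fsaP f s a z : fsa G T f s a z <->
  (exists p g, [/\ forall i, 0 <= p i <= indic R T s i, forall s', f s' (g s')
     & z = (fun i => p i + \sum_s' delta G s a s' * g s' i)])
  /\ (forall i, 0 <= z i <= 1).
Proof.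
split=> [[[p [_ [[p0 [_ -> ple]] [gd [Hgd ->] ->]]]] [z0 [_ -> zle]]] | ].
  have /choice [g Hg] : forall s', exists y, f s' y /\ (fun i => delta G s a s' * y i) = gd s'.
    by move=> s'; case: (Hgd s') => y fy <-; exists y.
  split=> [|i]; last by rewrite z0 zle.
  exists p, g; split=> [i|s'|]; first by rewrite p0 ple.
    by case: (Hg s').
  by apply: funext => i; congr (_ + _); apply: eq_bigr => s' _; case: (Hg s') => _ <-.
case=> [[p [g [p01 fg ->]]] z01]; split.
  exists p, (fun i => \sum_s' delta G s a s' * g s' i); split=> //.
    by split=> [i|]; [case/andP: (p01 i) | exists (indic R T s) => // i; case/andP: (p01 i)].
  by exists (fun s' i => delta G s a s' * g s' i); split=> // s'; exists (g s').
by split=> [i|]; [case/andP: (z01 i) | exists (vconst 1) => // i; case/andP: (z01 i)].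
Qed.

Lemma fsa_scale_closed f s a : (forall s', scale_closed (f s')) -> scale_closed (fsa G T f s a).
Proof.
move=> fsc z c /fsaP [[p [g [p01 fg ->]]] z01] c01; apply/fsaP; split; last first.
  by move=> i; case/andP: (z01 i) => z0 z1; case/andP: (c01 i) => c0 c1;
    rewrite mulr_ge0 //= mulr_ile1.
exists (fun i => c i * p i), (fun s' i => c i * g s' i); split=> [i|s'|].
- case/andP: (p01 i) => p0 p1; case/andP: (c01 i) => c0 c1.
  by rewrite mulr_ge0 //= (le_trans _ p1) // ler_piMl.
- exact: fsc.
by apply: funext => i; rewrite mulrDr mulr_sumr; congr (_ + _);
  apply: eq_bigr => s' _; rewrite mulrCA.
Qed.

Lemma fsa_convex f s a : (forall s', convex_set (f s')) -> convex_set (fsa G T f s a).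
Proof.
move=> fconv _ _ l /fsaP [[p [g [p01 fg ->]]] x01] /fsaP [[q [g' [q01 fg' ->]]] y01] l01.
have [l0 l1] : 0 <= l /\ 0 <= 1 - l by case/andP: l01 => -> ?; rewrite subr_ge0.
have mix (u v b : R) : 0 <= u <= b -> 0 <= v <= b -> 0 <= l * u + (1 - l) * v <= b.
  case/andP=> u0 ub /andP[v0 vb]; rewrite addr_ge0 ?mulr_ge0 //=.
  apply: le_trans (_ : l * b + (1 - l) * b <= b); last by rewrite -mulrDl subrKC mul1r.
  by rewrite lerD // ler_wpM2l.
apply/fsaP; split=> [|i]; last exact: mix (x01 i) (y01 i).
exists (fun i => l * p i + (1 - l) * q i), (fun s' i => l * g s' i + (1 - l) * g' s' i).
split=> [i|s'|]; [exact: mix (p01 i) (q01 i) | exact: fconv | ].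
apply: funext => i; rewrite !mulrDr !mulr_sumr -!addrA; congr (_ + _).
rewrite addrCA; congr (_ + _); rewrite -big_split /=; apply: eq_bigr => s' _.
by rewrite mulrDr mulrCA [(1 - l) * _]mulrCA.
Qed.

Lemma fsa_down_convex f s a : (forall s', down_convex (f s')) -> down_convex (fsa G T f s a).
Proof.
move=> fdc; split.
- by apply: fsa_scale_closed => s'; case: (fdc s').
- by apply: fsa_convex => s'; case: (fdc s').
- by move=> z /fsaP [].
apply/fsaP; split=> [|i]; last by rewrite lexx ler01.
exists (vconst 0), (fun=> vconst 0); split=> [i|s'|].
- by rewrite /vconst /indic lexx /=; case: ifP; rewrite ?ler01.
- by case: (fdc s').
by apply: funext => i; rewrite add0r big1 // => s' _; rewrite mulr0.
Qed.

Lemma bellman_down_convex f s : (forall s', down_convex (f s')) -> down_convex (bellman G T f s).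
Proof.
move=> fdc; have fsa_dc a := fsa_down_convex s a fdc.
have [a0 a0A] := Av_nonempty wf s.
rewrite /bellman; case: ifP => _; split.
- apply: conv_scale_closed => z c [a aA Hz] c01.
  by exists a => //; apply: dc_scale (fsa_dc a) _ _ Hz c01.
- exact: conv_convex.
- by apply: conv_boxed => z [a _ Hz]; apply: dc_boxed (fsa_dc a) _ Hz.
- by apply: subset_conv; exists a0 => //; apply: dc0.
- by move=> z c Hz c01 a aA; apply: dc_scale (fsa_dc a) _ _ (Hz a aA) c01.
- by move=> x y l Hx Hy l01 a aA; apply: dc_convex (fsa_dc a) _ _ _ (Hx a aA) (Hy a aA) l01.
- by move=> z Hz; apply: dc_boxed (fsa_dc a0) _ (Hz a0 a0A).
- by move=> a _; apply: dc0.
Qed.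

Lemma Lseq_down_convex k s : down_convex (Lseq G T k s).
Proof.
elim: k s => [|k IH] s /=; last exact: bellman_down_convex.
split=> [_ c -> _|_ _ l -> -> _|_ -> i|//]; last by rewrite lexx ler01.
  by apply: funext => i; rewrite /vconst mulr0.
by apply: funext => i; rewrite /vconst !mulr0 addr0.
Qed.

Lemma fsa_decomp f s (x : A -> vecn) : (forall s', f s' (vconst 0)) ->
  (forall a, a \in Av G s -> fsa G T f s a (x a)) ->
  exists g : A -> S -> vecn, (forall a s', f s' (g a s')) /\
    forall a, a \in Av G s -> forall i, s \notin T i -> x a i <= \sum_s' delta G s a s' * g a s' i.
Proof.
move=> f0 Hx; suff /choice [g Hg] : forall a, exists g : S -> vecn, (forall s', f s' (g s')) /\
    (a \in Av G s -> forall i, s \notin T i -> x a i <= \sum_s' delta G s a s' * g s' i).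
  by exists g; split=> [a s'|a]; case: (Hg a).
move=> a; have [aA|aNA] := boolP (a \in Av G s); last by exists (fun=> vconst 0).
case/fsaP: (Hx a aA) => [[p [g [p01 fg ->]]] _]; exists g; split=> // _ i sNT.
by move: (p01 i); rewrite /indic (negPf sNT) => /andP[_ p0]; rewrite /= gerDr.
Qed.

Lemma bellman_decomp f s x : (forall s', down_convex (f s')) -> bellman G T f s x ->
  exists mu (g : A -> S -> vecn), [/\ is_max G s -> distr_on (Av G s) mu,
    forall a s', f s' (g a s') &
    forall pi, distr_on (Av G s) pi -> (is_max G s -> pi = mu) -> forall i, s \notin T i ->
      x i <= \sum_a pi a * \sum_s' delta G s a s' * g a s' i].
Proof.
move=> fdc; have f0 s' := dc0 (fdc s').
rewrite /bellman; case: ifP => Hm Hx.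
  have [mu [y [Hmu Hy ->]]] := conv_bigcup_decomp
    (fun a => dc_convex (fsa_down_convex s a fdc)) (fun a => dc0 (fsa_down_convex s a fdc)) Hx.
  have [g [fg Hg]] := fsa_decomp f0 (fun a _ => Hy a).
  exists mu, g; split=> // pi _ /(_ isT) -> i sNT.
  by apply: (expect_le Hmu) => a aA; apply: Hg.
have [g [fg Hg]] := fsa_decomp (x := fun=> x) f0 Hx.
exists (fun=> 0), g; split=> // pi Hpi _ i sNT.
by rewrite -(expect_const Hpi (x i)); apply: (expect_le Hpi) => a aA; apply: Hg.
Qed.

Lemma Lseq_guaranteed k s x h : Lseq G T k s x ->
  exists2 sg, valid_strategy G true sg & forall tau, valid_strategy G false tau ->
    forall i, x i <= RW sg tau (T i) k h s.
Proof.
elim: k s x h => [|k IH] s x h Hx.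
  have Hdef := default_strategy_valid (b := true) wf.
  exists (default_strategy wf) => // tau Htau i.
  by rewrite Hx; case/andP: (reach_within_bounds wf (T i) 0 h s Hdef Htau).
have [mu [g [Hmu fg Hg]]] := bellman_decomp (fun s' => Lseq_down_convex k s') Hx.
have /choice [fam Hfam] : forall p : A * S, exists sg, valid_strategy G true sg /\
    forall tau, valid_strategy G false tau ->
      forall i, g p.1 p.2 i <= RW sg tau (T i) k (rcons h (s, p.1)) p.2.
  by move=> [a s']; have [sg ? ?] := IH s' _ (rcons h (s, a)) (fg a s'); exists sg.
pose sg := branch wf h s mu (fun a s' => fam (a, s')).
have Hsg : valid_strategy G true sg by apply: branch_valid => // a s'; case: (Hfam (a, s')).
exists sg => // tau Htau i /=; case: ifP => sT.
  by case/andP: (dc_boxed (Lseq_down_convex k.+1 s) Hx i).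
have Hpi := strategy_distr h s Hsg Htau.
apply: le_trans (Hg _ Hpi _ i (negbT sT)) _.
  by move=> Hm; apply: funext => a; rewrite Hm /sg branch_root.
apply: (expect_le Hpi) => a aA; apply: (expect_le (delta_distr wf aA)) => s' _.
rewrite (@reach_within_local _ _ _ _ sg (fam (a, s'))) => [|h' t Hext c].
  by case: (Hfam (a, s')) => _ /(_ tau Htau i).
by rewrite /sg (branch_extends wf mu _ Hext).
Qed.

Lemma Lseq_achievable k s x : Lseq G T k s x -> achievable G T s x.
Proof.
move=> Hx; split=> [i|]; first by case/andP: (dc_boxed (Lseq_down_convex k s) Hx i).
have [sg Hsg Hle] := Lseq_guaranteed [::] Hx; exists sg; split=> // tau Htau i.
exact: le_trans (Hle tau Htau i) (reach_within_le_prob _ _ _ _ Hsg Htau).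
Qed.

Lemma fsa_mem f s a (y : S -> vecn) z : (forall s', scale_closed (f s')) ->
  (forall s', f s' (y s')) -> (forall i, 0 <= z i <= 1) ->
  (forall i, s \notin T i -> z i <= \sum_s' delta G s a s' * y s' i) -> fsa G T f s a z.
Proof.
move=> fsc fy z01 zle; apply/fsaP; split=> //.
have /choice [c Hc] : forall i, exists c, (0 <= c <= 1) /\
    z i = (if s \in T i then z i else 0) + c * \sum_s' delta G s a s' * y s' i.
  move=> i; case: ifP => sT; first by exists 0; rewrite lexx ler01 mul0r addr0.
  have [|c c01 ->] := @exists_ratio _ (z i) (\sum_s' delta G s a s' * y s' i).
    by case/andP: (z01 i) => -> _; rewrite zle ?sT.
  by exists c; rewrite add0r.
exists (fun i => if s \in T i then z i else 0), (fun s' i => c i * y s' i); split.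
- by move=> i; rewrite /indic; case: ifP => _; rewrite ?lexx.
- by move=> s'; apply: fsc => // i; case: (Hc i).
apply: funext => i; case: (Hc i) => _ {1}->; congr (_ + _).
by rewrite mulr_sumr; apply: eq_bigr => s' _; rewrite mulrCA.
Qed.

Lemma bellman_min_mem f s (y : A -> S -> vecn) z : ~~ is_max G s ->
  (forall s', scale_closed (f s')) -> (forall a s', f s' (y a s')) ->
  (forall i, 0 <= z i <= 1) ->
  (forall a, a \in Av G s -> forall i, s \notin T i -> z i <= \sum_s' delta G s a s' * y a s' i) ->
  bellman G T f s z.
Proof.
by rewrite /bellman => /negPf -> fsc fy z01 zle a aA; apply: fsa_mem (zle a aA).
Qed.

Lemma bellman_max_mem f s (y : A -> S -> vecn) mu : is_max G s ->
  (forall s', scale_closed (f s')) -> (forall a s', f s' (y a s')) ->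
  (forall a s' i, 0 <= y a s' i <= 1) -> distr_on (Av G s) mu ->
  bellman G T f s
    (fun i => if s \in T i then 1 else \sum_a mu a * \sum_s' delta G s a s' * y a s' i).
Proof.
rewrite /bellman => -> fsc fy y01 Hmu.
pose z a i := if s \in T i then 1 else \sum_s' delta G s a s' * y a s' i.
have -> : (fun i => if s \in T i then 1 else \sum_a mu a * \sum_s' delta G s a s' * y a s' i)
    = (fun i => \sum_a mu a * z a i).
  by apply: funext => i; rewrite /z; case: ifP; rewrite ?(expect_const Hmu).
apply: conv_combination Hmu _ => a aA; exists a => //.
apply: (fsa_mem fsc (fy a)) => [i|i sNT]; last by rewrite /z (negPf sNT).
rewrite /z; case: ifP => _; first by rewrite ler01 lexx.
by apply: (expect_bounds (delta_distr wf aA)) => s' _.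
Qed.

Lemma br_value_in_Lseq sg k h s : valid_strategy G true sg ->
  Lseq G T k s (fun i => br_value wf sg (T i) k h s).
Proof.
move=> Hsg; elim: k h s => [|k IH] h s //=.
have fsc s' := dc_scale (Lseq_down_convex k s').
have y01 a s' i := br_value_bounds wf Hsg (T i) k (rcons h (s, a)) s'.
have z01 i := br_step_bounds wf Hsg (T i) h s (br_value_bounds wf Hsg (T i) k).
rewrite {1}/br_step; case: (boolP (is_max G s)) => Hm.
  by apply: bellman_max_mem => //; apply: sg_distr.
apply: (bellman_min_mem (y := fun a s' i => br_value wf sg (T i) k (rcons h (s, a)) s')) => //.
  by move=> i; have := z01 i; rewrite /br_step (negPf Hm).
by move=> a aA i sNT; rewrite (negPf sNT); apply: min_act_le.
Qed.

Lemma achievable_boxed s : boxed (achievable G T s).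
Proof.
move=> x [x0 [sg [Hsg Hx]]] i; rewrite x0 /=.
have Hdef := default_strategy_valid (b := false) wf.
exact: le_trans (Hx _ Hdef i) (reach_prob_le1 wf _ _ Hsg Hdef).
Qed.

Lemma achievable_shrink_Linf s x c : achievable G T s x -> 0 <= c < 1 ->
  Linf G T s (fun i => c * x i).
Proof.
move=> [x0 [sg [Hsg Hx]]] /andP[c0 c1].
have [k Hk] : exists k, forall i, c * x i <= br_value wf sg (T i) k [::] s.
  apply: eventually_all => [i|i k k' kk' /le_trans]; last by apply; apply: br_value_mono.
  have x_le : x i <= br_limit wf sg (T i) [::] s.
    exact: le_trans (Hx _ (br_strategy_valid wf sg (T i)) i) (reach_prob_le_br_limit wf Hsg _ s).
  have := x0 i; rewrite le_eqVlt => /orP[/eqP <-|xi_gt0].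
    by exists 0%N; rewrite mulr0.
  have [|k Hk] := br_limit_approx wf Hsg (T i) [::] s (e := (1 - c) * x i).
    by rewrite mulr_gt0 // subr_gt0.
  by exists k; move: Hk x_le; lra.
exists k => //; apply: scale_closed_le (dc_scale (Lseq_down_convex k s)) _ _.
  exact: br_value_in_Lseq [::] s Hsg.
by move=> i; rewrite mulr_ge0 // Hk.
Qed.

Lemma Linf_boxed s : boxed (Linf G T s).
Proof. by move=> x [k _ /(dc_boxed (Lseq_down_convex k s))]. Qed.

Lemma Linf_scale_achievable s x c : Linf G T s x -> 0 <= c <= 1 ->
  achievable G T s (fun i => c * x i).
Proof.
move=> [k _ Lx] c01; apply: (@Lseq_achievable k).
exact: (dc_scale (Lseq_down_convex k s) Lx (c := fun=> c)).
Qed.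

End Bellman.

Theorem proposition5p2 (R : realType) (S A : finType) (G : game R S A)
  (n : nat) (T : 'I_n -> {set S}) :
  wf_game G ->
  forall (s : S) (d : vec R n), in_D d ->
    dirval (Linf G T s) d = dirval (achievable G T s) d.
Proof.
move=> wf s d _; apply/eqP; rewrite eq_le; apply/andP; split; apply: dirval_le_shrink.
- exact: achievable_boxed.
- by move=> x c Lx /andP[c0 c1]; apply: (Linf_scale_achievable wf Lx); rewrite (ltW c0) (ltW c1).
- exact: Linf_boxed.
- by move=> x c Ax /andP[c0 c1]; apply: (achievable_shrink_Linf wf Ax); rewrite (ltW c0) c1.
Qed.
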